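(* Let $\{\rho_\theta\}$ be a two-parameter qubit model satisfying the regularity conditions, with Bloch vectors $\mathbf s_\theta$, and let $W=[w_{ij}]$ be a $2\times 2$ real positive definite matrix. Then \[ C_\theta^H[W]=\min_{\vec\xi\in\mathbb R^2}h_\theta[\vec\xi|W], \] where, for $\vec\xi=(\xi^1,\xi^2)^T$, \[ h_\theta[\vec\xi|W]=\mathrm{Tr}(WG_\theta^{-1})+\langle\boldsymbol\ell_\theta^\perp,Q_\theta^{-1}\boldsymbol\ell_\theta^\perp\rangle(\vec\xi|W\vec\xi)+2\sqrt{\det W}\,\Big|\langle\boldsymbol\ell_\theta^1,F_\theta\boldsymbol\ell_\theta^2\rangle+(1-s_\theta^2)(\vec\gamma_\theta|\vec\xi)\Big|. \]
   Context: Two-parameter qubit model: density matrices $\rho_\theta=\tfrac12(I+\mathbf s_\theta\cdot\boldsymbol\sigma)$ on $\mathbb C^2$, $\theta=(\theta^1,\theta^2)\in\Theta\subset\mathbb R^2$ open, $\boldsymbol\sigma$ the Pauli matrices, with Bloch vector $\mathbf s_\theta\in\mathbb R^3$, $s_\theta=|\mathbf s_\theta|<1$ (regularity: full rank, smooth dependence on $\theta$, $\partial_1\rho_\theta,\partial_2\rho_\theta$ linearly independent, $\partial_i=\partial/\partial\theta^i$). $\langle\mathbf a,\mathbf b\rangle=\sum_i\bar a_ib_i$ on $\mathbb C^3$, $(\vec a|\vec b)=a_1b_1+a_2b_2$ on $\mathbb R^2$. $Q_\theta=\mathbb 1+\frac{|\mathbf s_\theta\rangle\langle\mathbf s_\theta|}{1-s_\theta^2}$,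 so $Q_\theta^{-1}=\mathbb 1-|\mathbf s_\theta\rangle\langle\mathbf s_\theta|$; $F_\theta\mathbf a=\mathbf s_\theta\times\mathbf a$. SLD Bloch vectors $\boldsymbol\ell_{\theta,i}=Q_\theta\partial_i\mathbf s_\theta$; SLD Fisher matrix $G_\theta=[g_{\theta,ij}]$, $g_{\theta,ij}=\langle\partial_i\mathbf s_\theta,Q_\theta\partial_j\mathbf s_\theta\rangle$ (equal to the usual SLD Fisher information $\mathrm{tr}(\rho_\theta\tfrac12\{L_{\theta,i},L_{\theta,j}\})$); SLD dual Bloch vectors $\boldsymbol\ell_\theta^i=\sum_j(G_\theta^{-1})^{ji}\boldsymbol\ell_{\theta,j}$; $\boldsymbol\ell_\theta^\perp=\partial_1\mathbf s_\theta\times\partial_2\mathbf s_\theta$; $\gamma_{\theta,i}=\langle\mathbf s_\theta,\boldsymbol\ell_{\theta,i}\rangle$, $\vec\gamma_\theta=(\gamma_{\theta,1},\gamma_{\theta,2})^T$. Holevo bound: $C_\theta^H[W]=\min_{\vec X}\{\mathrm{Tr}(W\,\mathrm{Re}\,Z_\theta[\vec X])+\mathrm{TrAbs}(W\,\mathrm{Im}\,Z_\theta[\vec X])\}$ over pairs $\vec X=(X^1,X^2)$ of hermitian operators with $\mathrm{tr}(\rho_\theta X^i)=0$, $\mathrm{tr}(\partial_i\rho_\theta X^j)=\delta^j_i$, where $Z_\theta[\vec X]=[\mathrm{tr}(\rho_\theta X^jX^i)]_{i,j}$ and $\mathrm{TrAbs}$ of a diagonalizable matrix is the sum of absolute values of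 its eigenvalues. *)

From HB Require Import structures.
From mathcomp Require Import all_boot all_order all_algebra.
From mathcomp Require Import all_classical all_reals.
From mathcomp Require Import topology normedtype derive.
From mathcomp Require Import complex.

Set Implicit Arguments.
Unset Strict Implicit.
Unset Printing Implicit Defensive.

Import Order.TTheory GRing.Theory Num.Theory.
Import numFieldNormedType.Exports.
Local Open Scope classical_set_scope.
Local Open Scope ring_scope.

Section QubitDefs.
Variable R : realType.
Local Notation C := R[i].

Definition toC (x : R) : C := (x%:C)%C.

Definition dot n (a b : 'cV[R]_n) : R := \sum_k a k 0 * b k 0.
Definition bnorm n (a : 'cV[R]_n) : R := Num.sqrt (dot a a).
Definition cross (a b : 'cV[R]_3) : 'cV[R]_3 :=
  \col_(k < 3) nth 0
    [:: a 1 0 * b 2 0 - a 2 0 * b 1 0;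
        a 2 0 * b 0 0 - a 0 0 * b 2 0;
        a 0 0 * b 1 0 - a 1 0 * b 0 0] k.

Definition sigmax : 'M[C]_2 := delta_mx 0 1 + delta_mx 1 0.
Definition sigmay : 'M[C]_2 := (- 'i%C) *: delta_mx 0 1 + 'i%C *: delta_mx 1 0.
Definition sigmaz : 'M[C]_2 := delta_mx 0 0 - delta_mx 1 1.
Definition blochop (v : 'cV[R]_3) : 'M[C]_2 :=
  toC (v 0 0) *: sigmax + toC (v 1 0) *: sigmay + toC (v 2 0) *: sigmaz.
Definition rho_of (s : 'cV[R]_3) : 'M[C]_2 := 2^-1 *: (1%:M + blochop s).

Definition dS (s : 'rV[R]_2 -> 'cV[R]_3) (th : 'rV[R]_2) (i : 'I_2) : 'cV[R]_3 :=
  'D_(delta_mx 0 i) s th.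
(* d_i rho_theta = (d_i s_theta . sigma)/2  (derivative of (I + s.sigma)/2) *)
Definition drho (s : 'rV[R]_2 -> 'cV[R]_3) (th : 'rV[R]_2) (i : 'I_2) : 'M[C]_2 :=
  2^-1 *: blochop (dS s th i).

Definition hermitian n (A : 'M[C]_n) : Prop := (map_mx Num.conj A)^T = A.

Definition holevo_feasible (rho : 'M[C]_2) (drh : 'I_2 -> 'M[C]_2)
  (X : 'I_2 -> 'M[C]_2) : Prop :=
  (forall i, hermitian (X i)) /\
  (forall i, \tr (rho *m X i) = 0) /\
  (forall i j, \tr (drh i *m X j) = (i == j)%:R).

Definition Zmat (rho : 'M[C]_2) (X : 'I_2 -> 'M[C]_2) : 'M[C]_2 :=
  \matrix_(i < 2, j < 2) \tr (rho *m X j *m X i).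

Definition ReM (M : 'M[C]_2) : 'M[R]_2 := map_mx (@complex.Re R) M.
Definition ImM (M : 'M[C]_2) : 'M[R]_2 := map_mx (@complex.Im R) M.

(* TrAbs of a 2x2 real matrix: sum of the absolute values of its two
   (complex) eigenvalues, i.e. of the two roots of its characteristic
   polynomial X^2 - tr(M) X + det(M), given by the quadratic formula. *)
Definition TrAbs (M : 'M[R]_2) : R :=
  let Mc := map_mx toC M in
  let t := \tr Mc in
  let r := sqrtC (t ^+ 2 - 4 * \det Mc) in
  complex.Re (`|(t + r) / 2| + `|(t - r) / 2|).

Definition holevo_fun (W : 'M[R]_2) (rho : 'M[C]_2) (X : 'I_2 -> 'M[C]_2) : R :=
  \tr (W *m ReM (Zmat rho X)) + TrAbs (W *m ImM (Zmat rho X)).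

Definition Qmat (s : 'cV[R]_3) : 'M[R]_3 :=
  1%:M + (1 - bnorm s ^+ 2)^-1 *: (s *m s^T).
Definition Fop (s a : 'cV[R]_3) : 'cV[R]_3 := cross s a.

Section SLD.
Variables (s : 'cV[R]_3) (d : 'I_2 -> 'cV[R]_3).
Definition ell_lo (i : 'I_2) : 'cV[R]_3 := Qmat s *m d i.
Definition Gmat : 'M[R]_2 := \matrix_(i < 2, j < 2) dot (d i) (Qmat s *m d j).
Definition ell_up (i : 'I_2) : 'cV[R]_3 :=
  \sum_(j < 2) (invmx Gmat) j i *: ell_lo j.
Definition ell_perp : 'cV[R]_3 := cross (d 0) (d 1).
Definition gammav : 'cV[R]_2 := \col_(i < 2) dot s (ell_lo i).

Definition hfun (W : 'M[R]_2) (xi : 'cV[R]_2) : R :=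
  \tr (W *m invmx Gmat)
  + dot ell_perp (invmx (Qmat s) *m ell_perp) * (xi^T *m W *m xi) 0 0
  + 2 * Num.sqrt (\det W) *
      `| dot (ell_up 0) (Fop s (ell_up 1))
         + (1 - bnorm s ^+ 2) * (gammav^T *m xi) 0 0 |.
End SLD.

Definition posdef (W : 'M[R]_2) : Prop :=
  W^T = W /\ forall x : 'cV[R]_2, x != 0 -> 0 < (x^T *m W *m x) 0 0.

Definition is_min (S : set R) (m : R) : Prop := S m /\ forall y, S y -> m <= y.

End QubitDefs.

From Pilot Require Import Defs.
From HB Require Import structures.
From mathcomp Require Import all_boot all_order all_algebra.
From mathcomp Require Import all_classical all_reals.
From mathcomp Require Import topology normedtype derive.
From mathcomp Require Import complex.
From mathcomp Require Import ring lra.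
Import Order.TTheory GRing.Theory Num.Theory.
Import numFieldNormedType.Exports.
Local Open Scope classical_set_scope.
Local Open Scope ring_scope.

Set Implicit Arguments.
Unset Strict Implicit.

(* Every hermitian 2x2 matrix is [c I + v.sigma]; for an admissible pair the
   condition [tr (rho X^i) = 0] forces [c = - s.v], and [tr (d_i rho X^j) =
   delta_ij] says that the Bloch vectors [x_j] of the [X^j] are biorthogonal
   to the [d_i s].  Then [Re Z_ij = <x_i, Q^-1 x_j>] and [Im Z] is the skew
   matrix with entry [s.(x_1 x x_2)], whose [TrAbs] against [W] is
   [2 sqrt (det W) |s.(x_1 x x_2)|].  The biorthogonal pairs are exactly
   [x_i = l^i + xi^i l_perp], and substituting them turns the Holevo function
   into [h[xi|W]].  So both minimisation problems have the same values, and
   [h[.|W]], a positive quadratic form plus the absolute value of an affine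
   function, attains its minimum. *)

Lemma ord2_ind (P : 'I_2 -> Prop) : P 0 -> P 1 -> forall i, P i.
Proof.
move=> P0 P1 [[|[|//]] lti].
- by rewrite (_ : Ordinal lti = 0) //; apply/val_inj.
- by rewrite (_ : Ordinal lti = 1) //; apply/val_inj.
Qed.

Lemma ord3_ind (P : 'I_3 -> Prop) : P 0 -> P 1 -> P 2 -> forall i, P i.
Proof.
move=> P0 P1 P2 [[|[|[|//]]] lti].
- by rewrite (_ : Ordinal lti = 0) //; apply/val_inj.
- by rewrite (_ : Ordinal lti = 1) //; apply/val_inj.
- by rewrite (_ : Ordinal lti = 2) //; apply/val_inj.
Qed.

Lemma big_ord2 (T : nmodType) (F : 'I_2 -> T) : \sum_(k < 2) F k = F 0 + F 1.
Proof. by rewrite !big_ord_recr big_ord0 /= add0r; congr (F _ + F _); apply/val_inj. Qed.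

Lemma big_ord3 (T : nmodType) (F : 'I_3 -> T) :
  \sum_(k < 3) F k = F 0 + F 1 + F 2.
Proof.
by rewrite !big_ord_recr big_ord0 /= add0r; congr (F _ + F _ + F _); apply/val_inj.
Qed.

Lemma det_mx2 (R : comNzRingType) (A : 'M[R]_2) :
  \det A = A 0 0 * A 1 1 - A 0 1 * A 1 0.
Proof.
rewrite (expand_det_row _ 0) big_ord2 /cofactor !det_mx11 !mxE /=.
have -> : lift (0 : 'I_2) (0 : 'I_1) = 1 by apply/val_inj.
have -> : lift (1 : 'I_2) (0 : 'I_1) = 0 by apply/val_inj.
by rewrite expr0 expr1 mul1r mulN1r mulrN.
Qed.

Lemma mulmx2E (R : pzSemiRingType) (A B : 'M[R]_2) i j :
  (A *m B) i j = A i 0 * B 0 j + A i 1 * B 1 j.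
Proof. by rewrite mxE big_ord2. Qed.

Lemma mxtrace_mul2 (R : pzSemiRingType) (A B : 'M[R]_2) :
  \tr (A *m B) = A 0 0 * B 0 0 + A 0 1 * B 1 0 + (A 1 0 * B 0 1 + A 1 1 * B 1 1).
Proof. by rewrite /mxtrace big_ord2 !mulmx2E. Qed.

Section Vectors.
Variable R : realType.
Implicit Types (u v w y : 'cV[R]_3).

Lemma dot_mulTmx n (u v : 'cV[R]_n) : (u^T *m v) 0 0 = dot u v.
Proof. by rewrite mxE; apply: eq_bigr => k _; rewrite mxE. Qed.

Lemma dotE u v : dot u v = u 0 0 * v 0 0 + u 1 0 * v 1 0 + u 2 0 * v 2 0.
Proof. exact: big_ord3. Qed.

Lemma cross0E u v : cross u v 0 0 = u 1 0 * v 2 0 - u 2 0 * v 1 0.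
Proof. by rewrite !mxE. Qed.
Lemma cross1E u v : cross u v 1 0 = u 2 0 * v 0 0 - u 0 0 * v 2 0.
Proof. by rewrite !mxE. Qed.
Lemma cross2E u v : cross u v 2 0 = u 0 0 * v 1 0 - u 1 0 * v 0 0.
Proof. by rewrite !mxE. Qed.
Definition crossE := (cross0E, cross1E, cross2E).

Lemma col3P u v : u 0 0 = v 0 0 -> u 1 0 = v 1 0 -> u 2 0 = v 2 0 -> u = v.
Proof. by move=> e0 e1 e2; apply/matrixP => i j; rewrite (ord1 j); elim/ord3_ind: i. Qed.

Lemma dotC u v : dot u v = dot v u.
Proof. by rewrite !dotE; ring. Qed.

Lemma dotDr u v w : dot u (v + w) = dot u v + dot u w.
Proof. by rewrite !dotE !mxE; ring. Qed.

Lemma dotBr u v w : dot u (v - w) = dot u v - dot u w.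
Proof. by rewrite !dotE !mxE; ring. Qed.

Lemma dotZr (c : R) u v : dot u (c *: v) = c * dot u v.
Proof. by rewrite !dotE !mxE; ring. Qed.

Lemma dotZl (c : R) u v : dot (c *: u) v = c * dot u v.
Proof. by rewrite dotC dotZr dotC. Qed.

Lemma crossDr u v w : cross u (v + w) = cross u v + cross u w.
Proof. by apply: col3P; rewrite [RHS]mxE !crossE !mxE; ring. Qed.

Lemma crossZr (c : R) u v : cross u (c *: v) = c *: cross u v.
Proof. by apply: col3P; rewrite [RHS]mxE !crossE !mxE; ring. Qed.

Lemma dot_ge0 u : 0 <= dot u u.
Proof. by rewrite dotE; nra. Qed.

Lemma dot_eq0 u : (dot u u == 0) = (u == 0).
Proof.
apply/eqP/eqP => [|->]; last by rewrite dotE !mxE; ring.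
rewrite dotE => u0; apply: col3P; rewrite mxE; nra.
Qed.

Lemma bnorm_sqr u : bnorm u ^+ 2 = dot u u.
Proof. by rewrite /bnorm sqr_sqrtr // dot_ge0. Qed.

Lemma lagrange_identity u v :
  dot (cross u v) (cross u v) = dot u u * dot v v - dot u v ^+ 2.
Proof. by rewrite !dotE !crossE; ring. Qed.

Lemma cross_cross u v w : cross u (cross v w) = dot u w *: v - dot u v *: w.
Proof. by apply: col3P; rewrite !crossE !mxE !dotE; ring. Qed.

Lemma perp_cross u v y : dot u y = 0 -> dot v y = 0 ->
  dot (cross u v) (cross u v) *: y = dot (cross u v) y *: cross u v.
Proof.
move=> uy0 vy0; apply/eqP; rewrite -subr_eq0; apply/eqP.
have := cross_cross (cross u v) y (cross u v).
rewrite [cross y _]cross_cross [dot y v]dotC [dot y u]dotC uy0 vy0 !scale0r subr0 => <-.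
by apply: col3P; rewrite !crossE !mxE; ring.
Qed.

Lemma cross_neq0 u v :
  (forall a b, a *: u + b *: v = 0 -> a = 0 /\ b = 0) -> cross u v != 0.
Proof.
move=> indep; apply/eqP => uv0.
have [_ uu0] : dot u v = 0 /\ - dot u u = 0.
  apply: indep; rewrite scaleNr -cross_cross uv0.
  by apply: col3P; rewrite !crossE !mxE; ring.
have u0 : u = 0 by apply/eqP; rewrite -dot_eq0 -oppr_eq0 uu0.
have := indep 1 0; rewrite u0 scaler0 scale0r addr0 => /(_ erefl) [/eqP].
by rewrite oner_eq0.
Qed.

End Vectors.

Section QForm.
Variables (R : realType) (s : 'cV[R]_3).
Hypothesis s_lt1 : dot s s < 1.
Implicit Types (u v w : 'cV[R]_3).

Definition Qinv_dot u v : R := dot u v - dot s u * dot s v.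

Lemma Qinv_dotC u v : Qinv_dot u v = Qinv_dot v u.
Proof. by rewrite /Qinv_dot dotC mulrC. Qed.

Lemma Qinv_dotDr u v w : Qinv_dot u (v + w) = Qinv_dot u v + Qinv_dot u w.
Proof. by rewrite /Qinv_dot !dotDr; ring. Qed.

Lemma Qinv_dotZr (c : R) u v : Qinv_dot u (c *: v) = c * Qinv_dot u v.
Proof. by rewrite /Qinv_dot !dotZr; ring. Qed.

Lemma one_sub_dot_neq0 : 1 - dot s s != 0.
Proof. by rewrite subr_eq0 eq_sym lt_eqF. Qed.

Lemma Qmat_mulE v k :
  (Qmat s *m v) k 0 = v k 0 + (1 - dot s s)^-1 * dot s v * s k 0.
Proof.
rewrite /Qmat mulmxDl mul1mx -scalemxAl -mulmxA !mxE big_ord1 bnorm_sqr.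
by rewrite dot_mulTmx; ring.
Qed.

Lemma invmx_Qmat : invmx (Qmat s) = 1%:M - s *m s^T.
Proof.
have s1 := one_sub_dot_neq0.
have sTs : s^T *m s = (dot s s)%:M.
  by apply/matrixP => i j; rewrite (ord1 i) (ord1 j) dot_mulTmx mxE eqxx mulr1n.
have QQ' : Qmat s *m (1%:M - s *m s^T) = 1%:M.
  rewrite /Qmat bnorm_sqr mulmxBr mulmx1 mulmxDl mul1mx -!scalemxAl.
  rewrite !mulmxA -(mulmxA s s^T s) sTs mul_mx_scalar -scalemxAl.
  by apply/matrixP => i j; rewrite !mxE; field.
by rewrite -[RHS](mulKmx (mulmx1_unit QQ').1) QQ' mulmx1.
Qed.

Lemma dot_invQ u v : dot u (invmx (Qmat s) *m v) = Qinv_dot u v.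
Proof.
rewrite /Qinv_dot invmx_Qmat mulmxBl mul1mx -mulmxA !dotE.
by rewrite !mxE !big_ord1 !dot_mulTmx !dotE; ring.
Qed.

Lemma Qinv_dotQ u v : Qinv_dot u (Qmat s *m v) = dot u v.
Proof.
have := one_sub_dot_neq0; rewrite /Qinv_dot !dotE !Qmat_mulE !dotE => s1.
by field.
Qed.

(* Cauchy-Schwarz: [dot s u ^+ 2 <= dot s s * dot u u < dot u u]. *)
Lemma Qinv_dot_gt0 u : u != 0 -> 0 < Qinv_dot u u.
Proof.
rewrite -dot_eq0 => u0.
have u_gt0 : 0 < dot u u by rewrite lt_def u0 dot_ge0.
have : 0 < (1 - dot s s) * dot u u by rewrite mulr_gt0 ?subr_gt0.
have := dot_ge0 (cross s u); rewrite lagrange_identity /Qinv_dot expr2; nra.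
Qed.

End QForm.

Section Pauli.
Variable R : realType.
Local Notation C := R[i].

Definition bloch_mx (c : R) (v : 'cV[R]_3) : 'M[C]_2 := toC c *: 1%:M + blochop v.

Lemma bloch_mxE c v : bloch_mx c v = \matrix_(i < 2, j < 2)
  if i == 0 then if j == 0 then ((c + v 2 0) +i* 0)%C else (v 0 0 +i* - v 1 0)%C
  else if j == 0 then (v 0 0 +i* v 1 0)%C else ((c - v 2 0) +i* 0)%C.
Proof.
apply/matrixP => i j; rewrite !mxE /toC.
by elim/ord2_ind: i; elim/ord2_ind: j; rewrite /=; simpc.
Qed.

Lemma bloch_mx_hermitian c v : Defs.hermitian (bloch_mx c v).
Proof.
apply/matrixP => i j; rewrite bloch_mxE !mxE.
by elim/ord2_ind: i; elim/ord2_ind: j; rewrite /=; simpc.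
Qed.

Lemma hermitian_realE (z : C) : z^* = z -> z = ((complex.Re z) +i* 0)%C.
Proof.
by case: z => a b /eqP; rewrite eq_complex /= => /andP[_ /eqP b0]; congr (_ +i* _)%C; lra.
Qed.

Lemma hermitian_bloch_mx (X : 'M[C]_2) :
  Defs.hermitian X -> exists c v, X = bloch_mx c v.
Proof.
move=> /matrixP hX.
have /hermitian_realE e00 : (X 0 0)^* = X 0 0 by have := hX 0 0; rewrite !mxE.
have /hermitian_realE e11 : (X 1 1)^* = X 1 1 by have := hX 1 1; rewrite !mxE.
have e10 : X 1 0 = (X 0 1)^* by have := hX 1 0; rewrite !mxE.
have e01 : X 0 1 = (complex.Re (X 0 1) +i* complex.Im (X 0 1))%C by case: (X 0 1).
move: e00 e11 e10 e01; set a0 := complex.Re _; set a1 := complex.Re _.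
set p := complex.Re _; set q := complex.Im _ => e00 e11 e10 e01.
exists ((a0 + a1) / 2), (\col_k [:: p; - q; (a0 - a1) / 2]`_k).
apply/matrixP => i j; elim/ord2_ind: i; elim/ord2_ind: j;
  rewrite bloch_mxE !mxE /= ?e00 ?e11 ?e10 ?e01; simpc; congr (_ +i* _)%C; lra.
Qed.

Lemma mxtrace_bloch_mx2 a u b v :
  \tr (bloch_mx a u *m bloch_mx b v) = (2 * (a * b + dot u v))%:C%C.
Proof.
by rewrite !bloch_mxE mxtrace_mul2 !mxE dotE /=; simpc; congr (_ +i* _)%C; ring.
Qed.

Lemma mxtrace_bloch_mx3 a u b v c w :
  \tr (bloch_mx a u *m bloch_mx b v *m bloch_mx c w) =
  ((2 * (a * b * c + c * dot u v + a * dot v w + b * dot u w))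
     +i* (2 * dot u (cross v w)))%C.
Proof.
rewrite !bloch_mxE mxtrace_mul2 !mulmx2E !mxE !dotE !crossE /=.
by simpc; congr (_ +i* _)%C; ring.
Qed.

Lemma rho_ofE s : rho_of s = bloch_mx 2^-1 (2^-1 *: s).
Proof.
apply/matrixP => i j; rewrite bloch_mxE !mxE /toC.
by elim/ord2_ind: i; elim/ord2_ind: j;
  rewrite /= ?mulr1n ?mulr0n; simpc; congr (_ +i* _)%C; field.
Qed.

Lemma half_blochopE v : 2^-1 *: blochop v = bloch_mx 0 (2^-1 *: v).
Proof.
apply/matrixP => i j; rewrite bloch_mxE !mxE /toC.
by elim/ord2_ind: i; elim/ord2_ind: j;
  rewrite /= ?mulr1n ?mulr0n; simpc; congr (_ +i* _)%C; field.
Qed.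

Lemma mxtrace_rho_bloch s b v :
  \tr (rho_of s *m bloch_mx b v) = (b + dot s v)%:C%C.
Proof. by rewrite rho_ofE mxtrace_bloch_mx2 dotZl; congr (_ +i* _)%C; field. Qed.

Lemma mxtrace_half_blochop d b v :
  \tr (2^-1 *: blochop d *m bloch_mx b v) = (dot d v)%:C%C.
Proof. by rewrite half_blochopE mxtrace_bloch_mx2 dotZl; congr (_ +i* _)%C; field. Qed.

Lemma mxtrace_rho_bloch2 s b v c w :
  \tr (rho_of s *m bloch_mx b v *m bloch_mx c w) =
  ((b * c + c * dot s v + b * dot s w + dot v w) +i* dot s (cross v w))%C.
Proof. by rewrite rho_ofE mxtrace_bloch_mx3 !dotZl; congr (_ +i* _)%C; field. Qed.

Lemma half_blochop_comb (a b : R) (u v : 'cV[R]_3) :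
  toC a *: (2^-1 *: blochop u) + toC b *: (2^-1 *: blochop v) =
  2^-1 *: blochop (a *: u + b *: v).
Proof.
rewrite !half_blochopE; apply/matrixP => i j; rewrite !bloch_mxE !mxE /toC.
by elim/ord2_ind: i; elim/ord2_ind: j; rewrite /=; simpc; congr (_ +i* _)%C; ring.
Qed.

Lemma blochop0 : blochop (0 : 'cV[R]_3) = 0.
Proof. by rewrite /blochop /toC !mxE rmorph0 !scale0r !addr0. Qed.

End Pauli.

Section HolevoBloch.
Variable R : realType.
Local Notation C := R[i].
Implicit Types (s : 'cV[R]_3) (W : 'M[R]_2) (d x : 'I_2 -> 'cV[R]_3).

(* [W M] has zero trace and determinant [det W * m^2], so its eigenvalues are
   [+/- i sqrt (det W) |m|]. *)
Lemma TrAbs_mul_skew (W M : 'M[R]_2) : W 0 1 = W 1 0 -> 0 <= \det W ->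
  M 0 0 = 0 -> M 1 1 = 0 -> M 0 1 = - M 1 0 ->
  TrAbs (W *m M) = 2 * Num.sqrt (\det W) * `|M 1 0|.
Proof.
move=> W_sym detW_ge0 M00 M11 M01; rewrite /TrAbs.
set D := \det W * M 1 0 ^+ 2.
have D_ge0 : 0 <= D by rewrite mulr_ge0 ?sqr_ge0.
have -> : \tr (map_mx (@toC R) (W *m M)) = 0.
  rewrite /mxtrace big_ord2 !mxE !big_ord2 M00 M11 M01 W_sym /toC.
  by simpc; congr (_ +i* _)%C; ring.
have -> : \det (map_mx (@toC R) (W *m M)) = D%:C%C.
  rewrite det_mx2 !mxE !big_ord2 M00 M11 M01 /D det_mx2 W_sym /toC.
  by simpc; congr (_ +i* _)%C; ring.
set r := sqrtC _.
have r_sqr : r ^+ 2 = (- (4 * D))%:C%C.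
  rewrite /r sqrtCK expr0n /= sub0r.
  have -> : (4 : C) = (4 : R)%:C%C by rewrite rmorph_nat.
  by simpc.
have r_norm : `|r| = (2 * Num.sqrt D)%:C%C.
  apply/eqP; rewrite -(@eqrXn2 _ 2) //; last by rewrite ler0c mulr_ge0 ?sqrtr_ge0.
  rewrite -normrX r_sqr normc_def /= expr0n addr0 sqrtr_sqr normrN.
  rewrite ger0_norm; last by rewrite mulr_ge0.
  rewrite -rmorphXn exprMn sqr_sqrtr //.
  by apply/eqP; congr (_%:C)%C; ring.
have -> : `|(0 + r) / 2| + `|(0 - r) / 2| = `|r| :> C.
  rewrite add0r sub0r mulNr normrN normrM -mulrDr.
  suff -> : `|2^-1 : C| + `|2^-1 : C| = 1 by rewrite mulr1.
  by rewrite ger0_norm ?invr_ge0 ?ler0n //; field.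
by rewrite r_norm /= /D sqrtrM // sqrtr_sqr mulrA.
Qed.

Definition centered_obs s x (i : 'I_2) : 'M[C]_2 :=
  bloch_mx (- dot s (x i)) (x i).

Definition holevo_bloch s W x : R :=
  \sum_i \sum_k W i k * Qinv_dot s (x i) (x k)
  + 2 * Num.sqrt (\det W) * `|dot s (cross (x 0) (x 1))|.

Lemma Zmat_centered s x i k : Zmat (rho_of s) (centered_obs s x) k i =
  (Qinv_dot s (x i) (x k) +i* dot s (cross (x i) (x k)))%C.
Proof. by rewrite mxE mxtrace_rho_bloch2 /Qinv_dot; congr (_ +i* _)%C; ring. Qed.

Lemma holevo_fun_centered s W x : W 0 1 = W 1 0 -> 0 <= \det W ->
  holevo_fun W (rho_of s) (centered_obs s x) = holevo_bloch s W x.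
Proof.
move=> W_sym detW_ge0; rewrite /holevo_fun /holevo_bloch; congr (_ + _).
  rewrite /mxtrace; apply: eq_bigr => i _; rewrite mxE; apply: eq_bigr => k _.
  by rewrite /ReM [map_mx _ _ _ _]mxE Zmat_centered.
rewrite TrAbs_mul_skew // /ImM ![map_mx _ _ _ _]mxE !Zmat_centered //=.
all: by rewrite !dotE !crossE; ring.
Qed.

Definition biorthogonal d x : Prop :=
  forall i j, dot (d i) (x j) = (i == j)%:R.

Lemma holevo_feasibleP s d (X : 'I_2 -> 'M[C]_2) :
  holevo_feasible (rho_of s) (fun i => 2^-1 *: blochop (d i)) X <->
  exists2 x, biorthogonal d x & X = centered_obs s x.
Proof.
split=> [[X_herm [X_unbiased X_dual]] | [x x_dual ->]]; last first.
  split; [|split] => [i|i|i j]; first exact: bloch_mx_hermitian.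
    by rewrite mxtrace_rho_bloch addNr.
  by rewrite mxtrace_half_blochop x_dual; case: (i == j).
have /choice [cx Xbloch] : forall i, exists cx : R * 'cV[R]_3, X i = bloch_mx cx.1 cx.2.
  by move=> i; have [c [v ->]] := hermitian_bloch_mx (X_herm i); exists (c, v).
exists (fun i => (cx i).2) => [i j | ].
  have := X_dual i j; rewrite Xbloch mxtrace_half_blochop.
  by case: (i == j) => -[].
apply: funext => i; rewrite /centered_obs Xbloch.
have := X_unbiased i; rewrite Xbloch mxtrace_rho_bloch => -[c0].
by congr bloch_mx; lra.
Qed.

End HolevoBloch.

Section SLD.
Variables (R : realType) (s : 'cV[R]_3) (d : 'I_2 -> 'cV[R]_3).
Hypothesis s_lt1 : dot s s < 1.

(* [det G = |l_perp|^2 + |(s.d0) d1 - (s.d1) d0|^2 / (1 - |s|^2)] *)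
Lemma Gmat_unit : ell_perp d != 0 -> Gmat s d \in unitmx.
Proof.
rewrite -dot_eq0 => perp_neq0.
rewrite unitmxE unitfE det_mx2 !mxE /ell_lo !dotE !Qmat_mulE !dotE.
set al := (1 - _)^-1.
have al_gt0 : 0 < al by rewrite invr_gt0 subr_gt0 -dotE.
set w := dot s (d 0) *: d 1 - dot s (d 1) *: d 0.
have pos_neq0 x : x = dot (ell_perp d) (ell_perp d) + al * dot w w -> x != 0.
  move=> ->; rewrite gt_eqF // ltr_pwDl ?mulr_ge0 ?dot_ge0 ?ltW //.
  by rewrite lt_def perp_neq0 dot_ge0.
by apply: pos_neq0; rewrite /w /ell_perp !dotE !crossE !mxE ?dotE; ring.
Qed.

Hypothesis G_unit : Gmat s d \in unitmx.
Local Notation G := (Gmat s d).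
Local Notation Gi := (invmx (Gmat s d)).
Local Notation L := (ell_lo s d).
Local Notation Lu := (ell_up s d).
Local Notation Lp := (ell_perp d).

Lemma Gmat_mulV j i : G j 0 * Gi 0 i + G j 1 * Gi 1 i = (j == i)%:R.
Proof. by rewrite -mulmx2E mulmxV // mxE. Qed.

Lemma ell_upE i : Lu i = Gi 0 i *: L 0 + Gi 1 i *: L 1.
Proof. exact: big_ord2. Qed.

Lemma ell_up_biorthogonal : biorthogonal d Lu.
Proof.
move=> j i; rewrite ell_upE dotDr !dotZr -Gmat_mulV !mxE.
by rewrite [Gi 0 i * _]mulrC [Gi 1 i * _]mulrC.
Qed.

Lemma Qinv_dot_ell_up i j : Qinv_dot s (Lu i) (Lu j) = Gi i j.
Proof.
rewrite [Lu j]ell_upE Qinv_dotDr !Qinv_dotZr !Qinv_dotQ // ![dot (Lu i) _]dotC.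
rewrite !ell_up_biorthogonal.
by elim/ord2_ind: i => /=; rewrite ?mulr1 ?mulr0 ?addr0 ?add0r.
Qed.

Lemma invmx_Gmat_sym i k : Gi i k = Gi k i.
Proof. by rewrite -!Qinv_dot_ell_up Qinv_dotC. Qed.

Lemma dot_ell_perp i : dot (d i) Lp = 0.
Proof. by elim/ord2_ind: i; rewrite /ell_perp !dotE !crossE; ring. Qed.

Lemma Qinv_dot_ell_up_perp i : Qinv_dot s (Lu i) Lp = 0.
Proof.
rewrite Qinv_dotC ell_upE Qinv_dotDr !Qinv_dotZr !Qinv_dotQ //.
by rewrite ![dot Lp _]dotC !dot_ell_perp !mulr0 addr0.
Qed.

Lemma triple_ell_perp_up j : dot s (cross Lp (Lu j)) =
  dot s (d 1) * (0 == j)%:R - dot s (d 0) * (1 == j)%:R.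
Proof.
have triple_L k : dot s (cross Lp (L k)) = dot s (d 1) * G 0 k - dot s (d 0) * G 1 k.
  by rewrite !mxE /ell_lo /ell_perp !dotE !crossE !Qmat_mulE !dotE; ring.
by rewrite ell_upE crossDr !crossZr dotDr !dotZr !triple_L -!Gmat_mulV; ring.
Qed.

Definition biorth_param (xi : 'cV[R]_2) (i : 'I_2) : 'cV[R]_3 := Lu i + xi i 0 *: Lp.

Lemma biorth_param_biorthogonal xi : biorthogonal d (biorth_param xi).
Proof.
move=> i j; rewrite dotDr dotZr dot_ell_perp mulr0 addr0.
exact: ell_up_biorthogonal.
Qed.

Lemma biorthogonal_param x : Lp != 0 -> biorthogonal d x ->
  exists xi, x = biorth_param xi.
Proof.
move=> Lp_neq0 x_dual.
have y_perp i j : dot (d i) (x j - Lu j) = 0.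
  by rewrite dotBr x_dual ell_up_biorthogonal // subrr.
exists (\col_j (dot Lp (x j - Lu j) / dot Lp Lp)); apply: funext => j.
have := perp_cross (y_perp 0 j) (y_perp 1 j).
move/(congr1 (fun v => (dot Lp Lp)^-1 *: v)); rewrite !scalerA mulVf ?dot_eq0 //.
by rewrite scale1r mulrC /biorth_param mxE => <-; rewrite addrC subrK.
Qed.

Lemma dot_ell_lo i : (1 - bnorm s ^+ 2) * dot s (ell_lo s d i) = dot s (d i).
Proof.
have := one_sub_dot_neq0 s_lt1.
by rewrite bnorm_sqr /ell_lo !dotE !Qmat_mulE !dotE => s1; field.
Qed.

Lemma holevo_bloch_param (W : 'M[R]_2) xi : W 0 1 = W 1 0 ->
  holevo_bloch s W (biorth_param xi) = hfun s d W xi.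
Proof.
move=> W_sym.
have Qinv_dot_shift u v w a b : Qinv_dot s (u + a *: w) (v + b *: w) =
    Qinv_dot s u v + b * Qinv_dot s u w + a * Qinv_dot s v w + a * b * Qinv_dot s w w.
  by rewrite /Qinv_dot !dotE !mxE; ring.
have triple_shift u v w a b : dot s (cross (u + a *: w) (v + b *: w)) =
    dot s (cross u v) - b * dot s (cross w u) + a * dot s (cross w v).
  by rewrite !dotE !crossE !mxE; ring.
rewrite /holevo_bloch /hfun /biorth_param; congr (_ + _ * _).
  rewrite !big_ord2 !Qinv_dot_shift !Qinv_dot_ell_up // !Qinv_dot_ell_up_perp //.
  rewrite dot_invQ // /mxtrace !big_ord2 !mulmx2E !mxE !big_ord2 !mxE.
  by rewrite !big_ord2 !mxE W_sym (invmx_Gmat_sym 1 0); ring.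
have triple_swap : dot (Lu 0) (Fop s (Lu 1)) = - dot s (cross (Lu 0) (Lu 1)).
  by rewrite /Fop !dotE !crossE; ring.
rewrite triple_shift !triple_ell_perp_up // -!dot_ell_lo triple_swap.
by rewrite -normrN mxE big_ord2 !mxE /=; congr `|_|; ring.
Qed.

End SLD.

Section QuadAbsMin.
Variable R : realFieldType.

(* The minimiser is [-B] clamped to [[-h, h]] with [h = k / (2 A)]. *)
Lemma quad_abs_min1 (A k B : R) : 0 < A -> 0 <= k ->
  exists u, forall t, A * u ^+ 2 + k * `|B + u| <= A * t ^+ 2 + k * `|B + t|.
Proof.
move=> A_gt0 k_ge0; set h := k / (2 * A).
have kE : k = 2 * A * h by rewrite /h mulrC divfK // mulf_neq0 // gt_eqF.
have h_ge0 : 0 <= h by rewrite /h divr_ge0 // mulr_ge0 // ltW.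
have abs_ge t : B + t <= `|B + t| /\ - (B + t) <= `|B + t|.
  by rewrite -{2}normrN !ler_norm.
have [hB|Bh] := lerP h B.
  exists (- h) => t; rewrite ger0_norm ?subr_ge0 //.
  have [ge1 _] := abs_ge t; have := sqr_ge0 (t + h); rewrite kE in k_ge0 *; nra.
have [Bh'|hB'] := lerP B (- h).
  exists h => t; rewrite ler0_norm -?lerBrDr ?sub0r //.
  have [_ ge2] := abs_ge t; have := sqr_ge0 (t - h); rewrite kE in k_ge0 *; nra.
exists (- B) => t; rewrite subrr normr0 mulr0 addr0.
have [ge1 ge2] := abs_ge t.
have h_abs : 0 <= h * `|B + t| - B * (B + t) by nra.
have := mulr_ge0 (ltW A_gt0) h_abs; have := mulr_ge0 (ltW A_gt0) (sqr_ge0 (t + B)).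
rewrite kE; nra.
Qed.

Definition qform2 (w0 w1 w2 x0 x1 : R) : R :=
  w0 * x0 ^+ 2 + 2 * w1 * x0 * x1 + w2 * x1 ^+ 2.

Section PosDef.
Variables (w0 w1 w2 : R).
Hypotheses (w0_gt0 : 0 < w0) (D_gt0 : 0 < w0 * w2 - w1 ^+ 2).
Local Notation D := (w0 * w2 - w1 ^+ 2).
Local Notation Q := (qform2 w0 w1 w2).

Lemma qform2_ge0 x0 x1 : 0 <= Q x0 x1.
Proof.
have QE : w0 * Q x0 x1 = (w0 * x0 + w1 * x1) ^+ 2 + D * x1 ^+ 2.
  by rewrite /qform2; ring.
by rewrite -(pmulr_rge0 _ w0_gt0) QE addr_ge0 ?sqr_ge0 // mulr_ge0 ?sqr_ge0 // ltW.
Qed.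

(* For [W = [[w0, w1], [w1, w2]]] and [m = v^T (adj W) v], the minimum of [Q]
   on the line [v0 x0 + v1 x1 = t] is [D t^2 / m], attained at [(t / m) adj W v];
   this reduces the problem to [quad_abs_min1]. *)
Lemma quad_abs_min2 (a k B v0 v1 : R) : 0 < a -> 0 <= k ->
  exists z0 z1, forall x0 x1,
    a * Q z0 z1 + k * `|B + (v0 * z0 + v1 * z1)|
    <= a * Q x0 x1 + k * `|B + (v0 * x0 + v1 * x1)|.
Proof.
move=> a_gt0 k_ge0.
have [/andP[/eqP-> /eqP->]|v_neq0] := boolP ((v0 == 0) && (v1 == 0)).
  exists 0, 0 => x0 x1; rewrite !mul0r !addr0 lerD2r.
  have -> : Q 0 0 = 0 by rewrite /qform2; ring.
  by rewrite mulr0 mulr_ge0 ?qform2_ge0 // ltW.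
set m := w2 * v0 ^+ 2 - 2 * w1 * v0 * v1 + w0 * v1 ^+ 2.
have m_gt0 : 0 < m.
  have mE : w0 * m = (w0 * v1 - w1 * v0) ^+ 2 + D * v0 ^+ 2 by rewrite /m; ring.
  rewrite -(pmulr_rgt0 _ w0_gt0) mE.
  have [v00|v0_neq0] := eqVneq v0 0.
    move: v_neq0; rewrite v00 eqxx /= => v1_neq0.
    rewrite (_ : _ + _ = w0 ^+ 2 * v1 ^+ 2); last by ring.
    apply: mulr_gt0; first exact: exprn_gt0.
    by rewrite lt_def sqrf_eq0 v1_neq0 sqr_ge0.
  by rewrite ltr_pwDr ?sqr_ge0 // mulr_gt0 // lt_def sqrf_eq0 v0_neq0 sqr_ge0.
have m_neq0 : m != 0 by rewrite gt_eqF.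
have A_gt0 : 0 < a * D / m by rewrite divr_gt0 // mulr_gt0.
have [u u_min] := quad_abs_min1 B A_gt0 k_ge0.
exists (u / m * (w2 * v0 - w1 * v1)), (u / m * (w0 * v1 - w1 * v0)) => x0 x1.
have -> : v0 * (u / m * (w2 * v0 - w1 * v1)) + v1 * (u / m * (w0 * v1 - w1 * v0)) = u.
  by move: m_neq0; rewrite /m => ?; field.
have -> : a * Q (u / m * (w2 * v0 - w1 * v1)) (u / m * (w0 * v1 - w1 * v0)) =
    a * D / m * u ^+ 2.
  by move: m_neq0; rewrite /qform2 /m => ?; field.
apply: le_trans (u_min (v0 * x0 + v1 * x1)) _; rewrite lerD2r.
have cauchy_schwarz : D * (v0 * x0 + v1 * x1) ^+ 2 <= m * Q x0 x1.
  rewrite -subr_ge0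
    (_ : _ - _ = (v0 * (w1 * x0 + w2 * x1) - v1 * (w0 * x0 + w1 * x1)) ^+ 2).
    exact: sqr_ge0.
  by rewrite /m /qform2; ring.
rewrite -subr_ge0 (_ : _ - _ = a / m * (m * Q x0 x1 - D * (v0 * x0 + v1 * x1) ^+ 2)).
  by rewrite mulr_ge0 ?subr_ge0 // divr_ge0 // ltW.
by field.
Qed.

End PosDef.
End QuadAbsMin.

Section PosDefQuadAbsMin.
Variable R : realType.

Lemma quad_form2E (W : 'M[R]_2) (x : 'cV[R]_2) : W 0 1 = W 1 0 ->
  (x^T *m W *m x) 0 0 = qform2 (W 0 0) (W 0 1) (W 1 1) (x 0 0) (x 1 0).
Proof.
by move=> W_sym; rewrite /qform2 !mxE !big_ord2 !mxE !big_ord2 !mxE W_sym; ring.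
Qed.

Lemma posdef2 (W : 'M[R]_2) : posdef W ->
  [/\ W 0 1 = W 1 0, 0 < W 0 0 & 0 < W 0 0 * W 1 1 - W 0 1 ^+ 2].
Proof.
move=> [W_sym W_pos]; have W01 : W 0 1 = W 1 0 by rewrite -{1}W_sym mxE.
have qE := quad_form2E _ W01.
have W00_gt0 : 0 < W 0 0.
  have := W_pos (\col_i (i == 0)%:R); rewrite qE !mxE /qform2 /=.
  rewrite expr1n expr0n /= !mulr0 !mulr1 !addr0 => -> //.
  by apply/eqP => /matrixP /(_ 0 0); rewrite !mxE /= => /eqP; rewrite oner_eq0.
split => //.
have := W_pos (\col_i (if i == 0 then - W 0 1 else W 0 0)); rewrite qE !mxE /qform2 /=.
have -> : W 0 0 * (- W 0 1) ^+ 2 + 2 * W 0 1 * - W 0 1 * W 0 0 + W 1 1 * W 0 0 ^+ 2 =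
    W 0 0 * (W 0 0 * W 1 1 - W 0 1 ^+ 2) by ring.
rewrite pmulr_rgt0 // => -> //.
by apply/eqP => /matrixP /(_ 1 0); rewrite !mxE /= => /eqP; rewrite gt_eqF.
Qed.

Lemma quad_abs_min (W : 'M[R]_2) (a k B : R) (v : 'cV[R]_2) :
  posdef W -> 0 < a -> 0 <= k ->
  exists z : 'cV[R]_2, forall x : 'cV[R]_2,
    a * (z^T *m W *m z) 0 0 + k * `|B + (v^T *m z) 0 0|
    <= a * (x^T *m W *m x) 0 0 + k * `|B + (v^T *m x) 0 0|.
Proof.
move=> /posdef2[W_sym W00_gt0 D_gt0] a_gt0 k_ge0.
have qE := quad_form2E _ W_sym.
have vE (x : 'cV[R]_2) : (v^T *m x) 0 0 = v 0 0 * x 0 0 + v 1 0 * x 1 0.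
  by rewrite mxE big_ord2 !mxE.
have [z0 [z1 z_min]] := quad_abs_min2 W00_gt0 D_gt0 B (v 0 0) (v 1 0) a_gt0 k_ge0.
exists (\col_i [:: z0; z1]`_i) => x; rewrite !qE !vE !mxE /=.
exact: z_min.
Qed.

End PosDefQuadAbsMin.

Lemma hfun_has_min (R : realType) (s : 'cV[R]_3) (d : 'I_2 -> 'cV[R]_3) (W : 'M[R]_2) :
  dot s s < 1 -> ell_perp d != 0 -> posdef W ->
  exists xs, forall xi, hfun s d W xs <= hfun s d W xi.
Proof.
move=> s_lt1 perp_neq0 W_posdef.
have perp_gt0 : 0 < dot (ell_perp d) (invmx (Qmat s) *m ell_perp d).
  by rewrite dot_invQ // Qinv_dot_gt0.
have K_ge0 : 0 <= 2 * Num.sqrt (\det W) by rewrite mulr_ge0 ?sqrtr_ge0.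
have [xs xs_min] := quad_abs_min (dot (ell_up s d 0) (Fop s (ell_up s d 1)))
  ((1 - bnorm s ^+ 2) *: gammav s d) W_posdef perp_gt0 K_ge0.
exists xs => xi; rewrite /hfun -!addrA lerD2l.
by have := xs_min xi; rewrite !linearZ /= -!scalemxAl !mxE.
Qed.

Theorem lemma2 (R : realType) (Theta : set 'rV[R]_2)
  (s : 'rV[R]_2 -> 'cV[R]_3) (W : 'M[R]_2) :
  open Theta ->
  (forall th, Theta th -> differentiable s th) ->
  (forall th, Theta th -> bnorm (s th) < 1) ->
  (forall th, Theta th -> forall a b : R,
      toC a *: drho s th 0 + toC b *: drho s th 1 = 0 -> a = 0 /\ b = 0) ->
  posdef W ->
  forall th, Theta th ->
  exists m : R,
    is_min [set y | exists X : 'I_2 -> 'M[R[i]]_2,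
                      holevo_feasible (rho_of (s th)) (drho s th) X /\
                      y = holevo_fun W (rho_of (s th)) X] m /\
    is_min [set y | exists xi : 'cV[R]_2,
                      y = hfun (s th) (dS s th) W xi] m.
Proof.
move=> _ _ s_lt1 drho_indep W_posdef th th_in.
have ss_lt1 : dot (s th) (s th) < 1.
  by rewrite -bnorm_sqr expr_lt1 ?sqrtr_ge0 ?s_lt1.
have d_indep a b : a *: dS s th 0 + b *: dS s th 1 = 0 -> a = 0 /\ b = 0.
  move=> ab0; apply: (drho_indep th th_in).
  by rewrite /drho half_blochop_comb ab0 blochop0 scaler0.
have perp_neq0 : ell_perp (dS s th) != 0 := cross_neq0 d_indep.
have G_unit := Gmat_unit ss_lt1 perp_neq0.
have [W_sym _ D_gt0] := posdef2 W_posdef.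
have detW_ge0 : 0 <= \det W by rewrite det_mx2 -W_sym -expr2 ltW.
have [xs xs_min] := hfun_has_min ss_lt1 perp_neq0 W_posdef.
have holevo_param xi : holevo_fun W (rho_of (s th))
    (centered_obs (s th) (biorth_param (s th) (dS s th) xi)) = hfun (s th) (dS s th) W xi.
  by rewrite holevo_fun_centered // holevo_bloch_param.
exists (hfun (s th) (dS s th) W xs); split; last first.
  by split=> [|_ [xi ->]]; [exists xs | exact: xs_min].
split=> [|_ [X [/holevo_feasibleP[x x_dual ->] ->]]].
  exists (centered_obs (s th) (biorth_param (s th) (dS s th) xs)); split=> //.
  by apply/holevo_feasibleP; exists (biorth_param (s th) (dS s th) xs);
    first exact: biorth_param_biorthogonal.
have [xi ->] := biorthogonal_param G_unit perp_neq0 x_dual.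
by rewrite holevo_param.
Qed.
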